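(* Assume $|\mathcal X|>2$, $\theta>0$, $u\in(0,1)$, Nakagami-$(p,q)$ fading, and let $\rho^*=\rho^*(\theta,u)$. Let $\mathsf q$ be a corner point of the interference-cloned Q cell $Q_{\mathsf x}(\rho^* )$ (a point of $\partial Q_{\mathsf x}(\rho^* )$ where two boundary arcs, belonging to the distance-ratio circles of two distinct interferers $\mathsf x',\mathsf x''$, meet), and suppose that $\mathsf x',\mathsf x''$ are the only interferers at minimal distance from $\mathsf q$. Then, with only the two nearest interferers taken into account, $\mathbb P\!\left(\frac{h_1r_1^{-\alpha}}{h_2r_2^{-\alpha}+h_3r_3^{-\alpha}}>\theta\right)=u$ at $\mathsf q$; in particular $\mathsf q\in\partial Q^{(2)}_{\mathsf x}$.
   Context: Setting: locally finite $\mathcal X\subset\mathbb{R}^2$, path loss exponent $\alpha>0$, unit powers; Nakagami-$(p,q)$ fading: serving fading $h_1\sim\mathrm{Gamma}(p,\text{rate }p)$, interferer fadings $h_2,h_3,\dots\sim\mathrm{Gamma}(q,\text{rate }q)$, all independent. $H^*=h_1/(h_2+h_3)$ with cdf $F_{H^*}$ and quantile $F_{H^*}^{-1}$; $\rho^*(\theta,u)=(\theta/F_{H^*}^{-1}(1-u))^{1/\alpha}$. Q cell: $Q_{\mathsf x}(\rho)=\{\mathsf y:\min_{\mathsf x'\in\mathcal X\setminus\{\mathsf x\}}\|\mathsf x'-\mathsf y\|>\rho\|\mathsf x-\mathsf y\|\}$; its boundary consists of arcs of the circles $\{\mathsf y:\|\mathsf x'-\mathsf y\|=\rho\|\mathsf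 x-\mathsf y\|\}$. For a location $\mathsf y$ with $\mathsf x$ as nearest point of $\mathcal X$, let $r_1=\|\mathsf x-\mathsf y\|\le r_2\le r_3$ be the three smallest distances from $\mathsf y$ to points of $\mathcal X$. Second-order Q cell: $Q^{(2)}_{\mathsf x}=\{\mathsf y:\ \mathsf x\text{ nearest to }\mathsf y,\ \mathbb P(h_1r_1^{-\alpha}/(h_2r_2^{-\alpha}+h_3r_3^{-\alpha})>\theta)>u\}$. *)

From HB Require Import structures.
From mathcomp Require Import all_boot all_order all_algebra.
From mathcomp Require Import all_classical all_reals all_analysis.
Set Implicit Arguments. Unset Strict Implicit. Unset Printing Implicit Defensive.
Import Order.TTheory GRing.Theory Num.Theory.
Import numFieldNormedType.Exports.
Local Open Scope classical_set_scope.
Local Open Scope ring_scope.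

Section Defs.
Variable R : realType.

Definition pt := (R * R)%type.
Definition eucl_dist (a b : pt) : R :=
  Num.sqrt ((a.1 - b.1) ^+ 2 + (a.2 - b.2) ^+ 2).

Definition tboundary (A : set pt) : set pt := closure A `\` interior A.

Definition locally_finite (X : set pt) : Prop :=
  forall (c : pt) (r : R), finite_set (X `&` [set y | eucl_dist c y <= r]).

Definition more_than_two (X : set pt) : Prop :=
  exists a b c, [/\ X a, X b, X c & [/\ a <> b, a <> c & b <> c]].

Definition min_interf_dist (X : set pt) (x y : pt) : R :=
  inf [set eucl_dist x' y | x' in X `\ x].

Definition Qcell (X : set pt) (x : pt) (rho : R) : set pt :=
  [set y | min_interf_dist X x y > rho * eucl_dist x y].

Definition ratio_circle (x x' : pt) (rho : R) : set pt :=
  [set y | eucl_dist x' y = rho * eucl_dist x y].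

(* r_2, r_3 : smallest and second smallest distances (with multiplicity)
   from y to points of X \ {x} *)
Definition r2dist (X : set pt) (x y : pt) : R :=
  inf [set t | exists z, (X `\ x) z /\ eucl_dist z y <= t].
Definition r3dist (X : set pt) (x y : pt) : R :=
  inf [set t | exists z z', [/\ (X `\ x) z, (X `\ x) z', z <> z',
                                eucl_dist z y <= t & eucl_dist z' y <= t]].

(* Gamma(k, rate k) density (normalised by its own integral, which equals
   Gamma(k) / k^k for k > 0) *)
Definition gamma_kernel (k x : R) : R :=
  if 0 < x then powR x (k - 1) * expR (- (k * x)) else 0.
Definition gamma_pdf (k x : R) : R :=
  gamma_kernel k x / fine (\int[@lebesgue_measure R]_(t in setT) (gamma_kernel k t)%:E)%E.

Variables (d : measure_display) (T : measurableType d) (P : probability T R).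

Definition has_gamma_law (k : R) (h : T -> R) : Prop :=
  measurable_fun setT h /\
  forall A : set R, measurable A ->
    P (h @^-1` A) = (\int[@lebesgue_measure R]_(x in A) (gamma_pdf k x)%:E)%E.

Definition indep3 (h1 h2 h3 : T -> R) : Prop :=
  forall A B C : set R, measurable A -> measurable B -> measurable C ->
    P (h1 @^-1` A `&` h2 @^-1` B `&` h3 @^-1` C) =
    (P (h1 @^-1` A) * P (h2 @^-1` B) * P (h3 @^-1` C))%E.

Definition cdf_Hstar (h1 h2 h3 : T -> R) (t : R) : R :=
  fine (P [set w | h1 w / (h2 w + h3 w) <= t]).
Definition quantile_Hstar (h1 h2 h3 : T -> R) (v : R) : R :=
  inf [set t | v <= cdf_Hstar h1 h2 h3 t].

Definition rho_star (h1 h2 h3 : T -> R) (alpha theta u : R) : R :=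
  powR (theta / quantile_Hstar h1 h2 h3 (1 - u)) (alpha^-1).

Definition succ_prob2 (h1 h2 h3 : T -> R) (alpha theta : R)
    (X : set pt) (x y : pt) : \bar R :=
  P [set w | theta < h1 w * powR (eucl_dist x y) (- alpha) /
       (h2 w * powR (r2dist X x y) (- alpha) + h3 w * powR (r3dist X x y) (- alpha))].

End Defs.

From HB Require Import structures.
From mathcomp Require Import all_boot all_order all_algebra.
From mathcomp Require Import all_classical all_reals all_analysis.
From mathcomp Require Import lra ring measurable_realfun.
Import Order.TTheory GRing.Theory Num.Theory.
Import numFieldNormedType.Exports Num.Def.
Local Open Scope classical_set_scope.
Local Open Scope ring_scope.

(* Let rho = rho*(theta, u) and r1 = |x - q|. The corner q lies on the ratio
   circle of x', and x', x'' are its nearest interferers, so r2 = r3 = rho r1.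
   The SIR at q is then rho^alpha H with H = h1 / (h2 + h3), and
   rho^alpha = theta / Q where Q is the (1 - u)-quantile of H; so the success
   probability is P(H > Q) = 1 - F(Q). Finally F(Q) = 1 - u because the law of
   H has no atoms: h1 has an atomless law and is independent of (h2, h3), and
   covering {h1 = c (h2 + h3)} by grid cells of (h2, h3) bounds its probability
   by the largest mass the law of h1 gives to a short interval, which is
   uniformly small. *)

Lemma measurable_inv (R : realType) : measurable_fun [set: R] (@GRing.inv R).
Proof.
have -> : [set: R] = [set x | x != 0] `|` [set 0].
  by apply/seteqP; split => x // _ /=; case: (eqVneq x 0) => hx; [right|left].
apply/measurable_funU.
- by apply: open_measurable; exact: open_neq.
- exact: measurable_set1.
split; last exact: measurable_fun_set1.
apply: open_continuous_measurable_fun; first exact: open_neq.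
by move=> x; rewrite inE => /inv_continuous.
Qed.

Definition grid_cell {R : numDomainType} (del : R) (i : nat) : set R :=
  `[i%:R * del, i%:R * del + del[.

Lemma grid_cell_truncn {R : archiRealFieldType} {del x : R} {i} : 0 < del ->
  grid_cell del i x -> truncn (x / del) = i.
Proof.
rewrite /grid_cell /= in_itv /= => del0 /andP[ix xi]; apply: truncn_def.
by rewrite ler_pdivlMr // ltr_pdivrMr // ix mulrSr mulrDl mul1r.
Qed.

Lemma grid_cell_mem {R : archiRealFieldType} {del x : R} : 0 < del -> 0 <= x ->
  grid_cell del (truncn (x / del)) x.
Proof.
move=> del0 x0; have /andP[] := truncn_itv (divr_ge0 x0 (ltW del0)).
rewrite /grid_cell /= in_itv /= ler_pdivlMr // ltr_pdivrMr // => -> /=.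
by rewrite mulrSr mulrDl mul1r.
Qed.

Lemma measure_bigcup2_le d (T : measurableType d) (R : realType)
    (mu : {measure set T -> \bar R}) (E G : nat -> nat -> set T) (e : R) :
  0 <= e -> (forall i j, measurable (E i j)) -> (forall i j, measurable (G i j)) ->
  (forall i j, (mu (E i j) <= e%:E * mu (G i j))%E) ->
  (forall i j i' j' w, G i j w -> G i' j' w -> i = i' /\ j = j') ->
  (mu (\bigcup_i \bigcup_j E i j) <= e%:E * mu (\bigcup_i \bigcup_j G i j))%E.
Proof.
move=> e0 mE mG EG Gdisj.
have mEi i : measurable (\bigcup_j E i j) by exact: bigcupT_measurable.
have mGi i : measurable (\bigcup_j G i j) by exact: bigcupT_measurable.
have union_le (F H : nat -> set T) : (forall k, measurable (F k)) ->
    (forall k, measurable (H k)) -> trivIset setT H ->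
    (forall k, mu (F k) <= e%:E * mu (H k))%E ->
    (mu (\bigcup_k F k) <= e%:E * mu (\bigcup_k H k))%E.
  move=> mF mH tH FH.
  have mFU : measurable (\bigcup_k F k) by exact: bigcupT_measurable.
  apply: le_trans (measure_sigma_subadditive mu mF mFU (@subset_refl _ _)) _.
  apply: le_trans (lee_nneseries (fun k _ _ => measure_ge0 _ _) (fun k _ => FH k)) _.
  by rewrite nneseriesZl // -measure_semi_bigcup //; exact: bigcupT_measurable.
apply: (union_le) => // [i i' _ _ [w [[j _ Gw] [j' _ Gw']]]|i].
  by have [] := Gdisj _ _ _ _ _ Gw Gw'.
apply: union_le => // j j' _ _ [w [Gw Gw']].
by have [] := Gdisj _ _ _ _ _ Gw Gw'.
Qed.

Lemma indep3_split {d} {T : measurableType d} {R : realType} {P : probability T R}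
    {h1 h2 h3 : T -> R} : indep3 P h1 h2 h3 -> forall A B C : set R,
  measurable A -> measurable B -> measurable C ->
  P (h1 @^-1` A `&` (h2 @^-1` B `&` h3 @^-1` C)) =
  (P (h1 @^-1` A) * P (h2 @^-1` B `&` h3 @^-1` C))%E.
Proof.
move=> indep A B C mA mB mC; rewrite setIA indep //.
have := indep _ _ _ measurableT mB mC.
by rewrite preimage_setT setTI probability_setT mul1e => ->; rewrite muleA.
Qed.

Definition atomless {d} {T : measurableType d} {R : realType} (P : probability T R)
  (X : T -> R) : Prop :=
  forall a, P (X @^-1` [set a]) = 0%E.

Section real_random_variable.
Context {d} {T : measurableType d} {R : realType} {P : probability T R}.
Variable X : {RV P >-> R}.

Lemma cvg_cdf_left a :
  cdf X (a - n.+1%:R^-1) @[n --> \oo] --> distribution P X `]-oo, a[.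
Proof.
have -> : `]-oo, a[%classic = \bigcup_n `]-oo, a - n.+1%:R^-1]%classic.
  apply/seteqP; split => t /=; rewrite in_itv /=.
    rewrite -subr_gt0 => /ltr_add_invr[n]; rewrite add0r ltrBrDl => ta.
    by exists n => //=; rewrite in_itv /= lerBrDr ltW // addrC.
  move=> [n _] /=; rewrite in_itv /= => /le_lt_trans; apply.
  by rewrite ltrBlDr ltrDl.
apply: nondecreasing_cvg_mu => [n||m n mn].
- exact: measurable_itv.
- by apply: bigcup_measurable => n _; exact: measurable_itv.
- apply/subsetPset; apply: subset_itvl.
  by rewrite bnd_simp lerD2l lerN2 lef_pV2 ?posrE // ler_nat.
Qed.

Lemma cdf_quantile v : atomless P X -> 0 < v < 1 ->
  cdf X (inf [set t | (v%:E <= cdf X t)%E]) = v%:E.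
Proof.
move=> X0 /andP[v0 v1].
set S := [set t | _]; set Q := inf S.
have [M [_ cdfM]] : \forall t \near -oo, (cdf X t < v%:E)%E.
  by have /(_ _ (open_ereal_lt' (_ : 0 < v%:E)%E)) := cvg_cdfNy0 X; apply; rewrite lte_fin.
have [N [_ cdfN]] : \forall t \near +oo, (v%:E < cdf X t)%E.
  by have /(_ _ (open_ereal_gt' (_ : v%:E < 1)%E)) := cvg_cdfy1 X; apply; rewrite lte_fin.
have SN : S (N + 1) by apply/ltW/cdfN; rewrite ltrDl.
have SM : lbound S M.
  by move=> t St; rewrite leNgt; apply/negP => /cdfM; rewrite ltNge St.
have S0 : S !=set0 by exists (N + 1).
have infS : has_inf S by split; [|exists M].
apply/eqP; rewrite eq_le; apply/andP; split; last first.
  apply: (cvge_to_ge (@cdf_right_continuous _ _ _ _ X Q)); near=> t.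
  have [s Ss sQ] : exists2 s, S s & s < t.
    by apply: inf_lt => //; near: t; exact: nbhs_right_gt.
  exact: le_trans Ss (cdf_nondecreasing X (ltW sQ)).
rewrite /cdf -(setUitv1 true) // measureU //=; last first.
  by apply/seteqP; split => // t [/=]; rewrite in_itv /= => /[swap] ->; rewrite ltxx.
rewrite [X in (_ + X)%E]/distribution /pushforward X0 adde0.
apply: (cvge_to_le (cvg_cdf_left Q)); near=> n.
apply/ltW; rewrite ltNge; apply/negP => /(ge_inf infS.2).
by rewrite -/Q lerBrDr gerDl leNgt invr_gt0 ltr0n.
Unshelve. all: by end_near.
Qed.

Lemma cvg_distribution_itvcc_shrink l :
  distribution P X `[l - n.+1%:R^-1, l + n.+1%:R^-1] @[n --> \oo] -->
  distribution P X [set l].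
Proof.
have -> : [set l] = \bigcap_n `[l - n.+1%:R^-1, l + n.+1%:R^-1]%classic.
  apply/seteqP; split => t /=.
    by move=> -> n _ /=; rewrite in_itv /= -ler_distl subrr normr0.
  move=> tl; apply/eqP; rewrite -subr_eq0 -normr_eq0 eq_le normr_ge0 andbT.
  rewrite leNgt; apply/negP => /ltr_add_invr[n]; rewrite add0r.
  by have := tl n I; rewrite /= in_itv /= -ler_distl => /le_lt_trans/[apply]; rewrite ltxx.
apply: nonincreasing_cvg_mu => [|n||m n mn].
- by rewrite (le_lt_trans (probability_le1 _ _)) ?ltry.
- exact: measurable_itv.
- by apply: bigcapT_measurable => n; exact: measurable_itv.
- apply/subsetPset; apply: subset_itv; rewrite bnd_simp ?lerD2l ?lerN2;
    by rewrite lef_pV2 ?posrE // ler_nat.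
Qed.

Lemma heavy_short_itv_bounded {e : R} : 0 < e -> exists M : R, forall s r : R,
  r <= 1 -> (e%:E < distribution P X `[s, (s + r)%R])%E -> `|s| <= M.
Proof.
move=> e0.
have [M1 [_ cdfM1]] : \forall t \near -oo, (cdf X t < e%:E)%E.
  by have /(_ _ (open_ereal_lt' (_ : 0 < e%:E)%E)) := cvg_cdfNy0 X; apply; rewrite lte_fin.
have [M2 [_ ccdfM2]] : \forall t \near +oo, (ccdf X t < e%:E)%E.
  by have /(_ _ (open_ereal_lt' (_ : 0 < e%:E)%E)) := cvg_ccdfy0 X; apply; rewrite lte_fin.
exists (`|M1| + `|M2| + 1) => s r r1 heavy.
have lo : M1 - 1 <= s.
  rewrite leNgt; apply/negP => sM1; move: heavy; apply/negP; rewrite -leNgt.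
  apply: le_trans (ltW (cdfM1 (s + r) _)); last lra.
  by rewrite le_measure ?inE //; apply: subset_itv; rewrite bnd_simp.
have hi : s <= M2 + 1.
  rewrite leNgt; apply/negP => sM2; move: heavy; apply/negP; rewrite -leNgt.
  apply: le_trans (ltW (ccdfM2 (M2 + 1) _)); last lra.
  by rewrite le_measure ?inE //; apply: subset_itv; rewrite bnd_simp.
have := ler_norm (- M1); have := ler_norm M2; have := normr_ge0 M1; have := normr_ge0 M2.
rewrite normrN ler_norml; lra.
Qed.

Lemma heavy_short_itv_cluster {s : nat -> R} {e : R} : bounded_fun s ->
  (forall n, e%:E <= distribution P X `[s n, (s n + n.+1%:R^-1)%R])%E ->
  exists l, (e%:E <= distribution P X [set l])%E.
Proof.
move=> /bolzano_weierstrass[f /increasing_seqP f_incr /cvg_ex[/= l sfl]] heavy.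
have f_ge j : (j <= f j)%N.
  by elim: j => // j IH; exact: leq_ltn_trans IH (f_incr j).
exists l; apply: (cvge_to_ge (cvg_distribution_itvcc_shrink l)); apply: nearW => m.
set r := m.+1%:R^-1; have r0 : 0 < r by rewrite invr_gt0.
have near_l : \forall j \near \oo, `|l - s (f j)| < r / 2.
  by move/cvgrPdist_lt : sfl; apply; rewrite divr_gt0.
have [j [/= sj_l jm]] := filter_ex (filterI near_l (nbhs_infty_ge (2 * m.+1)%N)).
have short : (f j).+1%:R^-1 <= r / 2.
  rewrite /r -invfM lef_pV2 ?posrE ?mulr_gt0 // -natrM ler_nat.
  by rewrite mulnC; apply: leq_trans jm _; exact: leqW (f_ge j).
apply: le_trans (heavy (f j)) _; rewrite le_measure ?inE //.
move: sj_l; rewrite ltr_distlC => /andP[lo hi].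
move: short; set a := (f j).+1%:R^-1 => short.
apply: subset_itv; rewrite bnd_simp; lra.
Qed.

Lemma distribution_short_itv_small {e : R} : atomless P X -> 0 < e ->
  exists n, forall s, (distribution P X `[s, (s + n.+1%:R^-1)%R] <= e%:E)%E.
Proof.
move=> X0 e0; apply: contrapT => /forallNP no_n.
have heavy n : exists s, (e%:E < distribution P X `[s, (s + n.+1%:R^-1)%R])%E.
  by have /existsNP[s /negP] := no_n n; rewrite -ltNge; exists s.
have [s {}heavy] := choice heavy.
have [M sM] := heavy_short_itv_bounded e0.
have s_bnd : bounded_fun s.
  exists M; split => [|N MN n _]; first exact: num_real.
  apply: le_trans (ltW MN).
  by apply: sM (heavy n); rewrite invf_le1 ?ler1n.
have [l] := heavy_short_itv_cluster s_bnd (fun n => ltW (heavy n)).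
by rewrite [X in (_ <= X)%E]/distribution /pushforward X0 lee_fin leNgt e0.
Qed.

End real_random_variable.

Section ratio_of_sum.
Context {d} {T : measurableType d} {R : realType} {P : probability T R}.
Variables h1 h2 h3 : {RV P >-> R}.
Hypotheses (indep : indep3 P h1 h2 h3) (h1_atomless : atomless P h1)
  (h1_gt0 : P (h1 @^-1` `]-oo, 0]) = 0%E) (h2_gt0 : P (h2 @^-1` `]-oo, 0]) = 0%E)
  (h3_gt0 : P (h3 @^-1` `]-oo, 0]) = 0%E).

Lemma measurable_ratio_sum : measurable_fun setT (fun w => h1 w / (h2 w + h3 w)).
Proof.
apply: measurable_funM => //.
by apply: (measurableT_comp (measurable_inv R)); exact: measurable_funD.
Qed.

Let measurable_ratio_sum_preimage (A : set R) : measurable A ->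
  measurable ((fun w => h1 w / (h2 w + h3 w)) @^-1` A).
Proof.
by move=> mA; rewrite -[X in measurable X]setTI; exact: measurable_ratio_sum.
Qed.

Let measurable_le0 (h : {RV P >-> R}) : measurable (h @^-1` `]-oo, 0]).
Proof. by apply: measurable_funPTI; exact: measurable_itv. Qed.

Let G (del : R) i j := h2 @^-1` grid_cell del i `&` h3 @^-1` grid_cell del j.

Let lo (c del : R) i j := c * (i%:R * del + j%:R * del).

Let E (c del : R) i j := h1 @^-1` `[lo c del i j, lo c del i j + 2 * c * del] `&` G del i j.

Let measurable_G del i j : measurable (G del i j).
Proof. by apply: measurableI; apply: measurable_funPTI; exact: measurable_itv. Qed.

Let measurable_E c del i j : measurable (E c del i j).
Proof.
by apply: measurableI => //; apply: measurable_funPTI; exact: measurable_itv.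
Qed.

Lemma ratio_sum_eq_cover {c del : R} : 0 < c -> 0 < del ->
  [set w | h1 w / (h2 w + h3 w) = c] `<=`
  (\bigcup_i \bigcup_j E c del i j `|` h2 @^-1` `]-oo, 0]) `|` h3 @^-1` `]-oo, 0].
Proof.
move=> c0 del0 w /= Hw.
have [h2w|h2w] := leP (h2 w) 0; first by left; right; rewrite /= in_itv.
have [h3w|h3w] := leP (h3 w) 0; first by right; rewrite /= in_itv.
have c2 := grid_cell_mem del0 (ltW h2w); have c3 := grid_cell_mem del0 (ltW h3w).
left; left; exists (truncn (h2 w / del)) => //; exists (truncn (h3 w / del)) => //.
split=> //; change (h1 w \in `[lo c del (truncn (h2 w / del)) (truncn (h3 w / del)),
  lo c del (truncn (h2 w / del)) (truncn (h3 w / del)) + 2 * c * del]).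
have -> : h1 w = c * (h2 w + h3 w) by rewrite -Hw divfK // gt_eqF ?addr_gt0.
move: c2 c3; rewrite /grid_cell /lo /= !in_itv /= => /andP[? ?] /andP[? ?].
by apply/andP; split; nra.
Qed.

Lemma prob_grid_cells_le (c del e : R) : 0 < c -> 0 < del ->
  (forall s, P (h1 @^-1` `[s, (s + 2 * c * del)%R]) <= e%:E)%E ->
  (P (\bigcup_i \bigcup_j E c del i j) <= e%:E)%E.
Proof.
move=> c0 del0 short.
have e0 : 0 <= e by rewrite -lee_fin (le_trans _ (short 0)).
apply: le_trans (_ : _ <= e%:E * P (\bigcup_i \bigcup_j G del i j))%E _.
  apply: measure_bigcup2_le => // [i j|i j i' j' w [c2 c3] [c2' c3']].
  - have : P (E c del i j) =
        (P (h1 @^-1` `[lo c del i j, (lo c del i j + 2 * c * del)%R]) * P (G del i j))%E.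
      by apply: indep3_split => //; exact: measurable_itv.
    move/eqP; rewrite eq_le => /andP[/le_trans + _]; apply.
    exact: lee_wpmul2r (short _).
  - by rewrite -(grid_cell_truncn del0 c2) -(grid_cell_truncn del0 c3)
      (grid_cell_truncn del0 c2') (grid_cell_truncn del0 c3').
rewrite -[leRHS]mule1 lee_wpmul2l ?lee_fin //.
by apply: probability_le1; apply: bigcupT_measurable => i; exact: bigcupT_measurable.
Qed.

Lemma prob_ratio_sum_eq0 c : 0 < c -> P [set w | h1 w / (h2 w + h3 w) = c] = 0%E.
Proof.
move=> c0; apply/eqP; rewrite eq_le measure_ge0 andbT.
apply/lee_addgt0Pr => e e0; rewrite add0e.
have [n short] := distribution_short_itv_small h1 h1_atomless e0.
set eta : R := n.+1%:R^-1 in short; set del := eta / (2 * c).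
(* A grid cell of side del for (h2, h3) confines c (h2 + h3) to an interval of
   length 2 c del = eta, which h1 hits with probability at most e. *)
have del0 : 0 < del by rewrite divr_gt0 ?mulr_gt0 ?invr_gt0.
have eta_del : eta = 2 * c * del by rewrite /del mulrC divfK // mulf_neq0 ?gt_eqF.
have mEU : measurable (\bigcup_i \bigcup_j E c del i j).
  by apply: bigcupT_measurable => i; exact: bigcupT_measurable.
have [mN2 mN3] := (measurable_le0 h2, measurable_le0 h3).
rewrite (le_trans (le_measure _ _ _ (ratio_sum_eq_cover c0 del0))) ?inE //.
- exact: measurable_ratio_sum_preimage (measurable_set1 c).
- by apply: measurableU => //; exact: measurableU.
rewrite [X in (X <= _)%E]measureU0 //; last exact: measurableU.
rewrite [X in (X <= _)%E]measureU0 //.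
by apply: prob_grid_cells_le => // s; rewrite -eta_del; exact: short.
Qed.

Lemma prob_ratio_sum_le0 : P [set w | h1 w / (h2 w + h3 w) <= 0] = 0%E.
Proof.
have [mN1 mN2 mN3] := And3 (measurable_le0 h1) (measurable_le0 h2) (measurable_le0 h3).
apply/eqP; rewrite eq_le measure_ge0 andbT.
have sub : [set w | h1 w / (h2 w + h3 w) <= 0] `<=`
    (h1 @^-1` `]-oo, 0] `|` h2 @^-1` `]-oo, 0]) `|` h3 @^-1` `]-oo, 0].
  move=> w /= Hw.
  have [?|h1w] := leP (h1 w) 0; first by left; left; rewrite /= in_itv.
  have [?|h2w] := leP (h2 w) 0; first by left; right; rewrite /= in_itv.
  have [?|h3w] := leP (h3 w) 0; first by right; rewrite /= in_itv.
  by move: Hw; rewrite leNgt divr_gt0 // addr_gt0.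
rewrite (le_trans (le_measure _ _ _ sub)) ?inE //.
- exact: measurable_ratio_sum_preimage (measurable_itv `]-oo, 0]).
- by apply: measurableU => //; exact: measurableU.
rewrite [X in (X <= _)%E]measureU0 //; last exact: measurableU.
by rewrite [X in (X <= _)%E]measureU0 // [X in (X <= _)%E](_ : _ = 0%E).
Qed.

Lemma ratio_sum_atomless : atomless P (fun w => h1 w / (h2 w + h3 w)).
Proof.
move=> c; have [c0|c0] := ltP 0 c; first exact: prob_ratio_sum_eq0.
apply/eqP; rewrite eq_le measure_ge0 andbT -prob_ratio_sum_le0 le_measure ?inE //.
- exact: measurable_ratio_sum_preimage (measurable_set1 c).
- exact: measurable_ratio_sum_preimage (measurable_itv `]-oo, 0]).
- by move=> w /= ->.
Qed.

Let Hs : {RV P >-> R} := mfun_Sub (mem_set measurable_ratio_sum).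

Lemma cdf_ratio_sum t : cdf Hs t = P [set w | h1 w / (h2 w + h3 w) <= t].
Proof. by []. Qed.

Lemma quantile_HstarE v : quantile_Hstar P h1 h2 h3 v = inf [set t | (v%:E <= cdf Hs t)%E].
Proof.
congr inf; apply/seteqP; split => t;
  by rewrite /= /cdf_Hstar -cdf_ratio_sum -lee_fin fineK ?fin_num_measure.
Qed.

Lemma cdf_quantile_Hstar u : 0 < u < 1 ->
  cdf Hs (quantile_Hstar P h1 h2 h3 (1 - u)) = (1 - u)%:E.
Proof.
move=> /andP[u0 u1]; rewrite quantile_HstarE; apply: cdf_quantile.
  exact: ratio_sum_atomless.
by rewrite subr_gt0 u1 ltrBlDr ltrDl.
Qed.

Lemma quantile_Hstar_gt0 u : 0 < u < 1 -> 0 < quantile_Hstar P h1 h2 h3 (1 - u).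
Proof.
move=> u01; rewrite ltNge; apply/negP => /(cdf_nondecreasing Hs).
rewrite cdf_quantile_Hstar // cdf_ratio_sum prob_ratio_sum_le0 lee_fin subr_le0 leNgt.
by case/andP: u01 => _ ->.
Qed.

Lemma prob_gt_quantile_Hstar u : 0 < u < 1 ->
  P [set w | quantile_Hstar P h1 h2 h3 (1 - u) < h1 w / (h2 w + h3 w)] = u%:E.
Proof.
move=> u01; set Q := quantile_Hstar _ _ _ _ _.
have -> : [set w | Q < h1 w / (h2 w + h3 w)] = ~` [set w | h1 w / (h2 w + h3 w) <= Q].
  by apply/seteqP; split => w /=; rewrite ltNge => /negP.
rewrite probability_setC; last exact: measurable_ratio_sum_preimage (measurable_itv `]-oo, Q]).
by rewrite -cdf_ratio_sum cdf_quantile_Hstar // -EFinB subKr.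
Qed.

End ratio_of_sum.

Section gamma_law.
Context {d} {T : measurableType d} {R : realType} {P : probability T R}.
Context {k : R} {h : T -> R}.

Lemma gamma_law_le0 : has_gamma_law P k h -> P (h @^-1` `]-oo, 0]) = 0%E.
Proof.
move=> [_ hl]; rewrite hl; last exact: measurable_itv.
apply: integral0_eq => t; rewrite /= in_itv /= => t0.
by rewrite /gamma_pdf /gamma_kernel ltNge t0 mul0r.
Qed.

Lemma gamma_law_atomless : has_gamma_law P k h -> atomless P h.
Proof. by move=> [_ hl] a; rewrite hl ?integral_set1. Qed.

End gamma_law.

Lemma gamma_Hstar_quantile {d} {T : measurableType d} {R : realType}
    {P : probability T R} {h1 h2 h3 : T -> R} {p q u : R} :
  has_gamma_law P p h1 -> has_gamma_law P q h2 -> has_gamma_law P q h3 ->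
  indep3 P h1 h2 h3 -> 0 < u < 1 ->
  0 < quantile_Hstar P h1 h2 h3 (1 - u) /\
  P [set w | quantile_Hstar P h1 h2 h3 (1 - u) < h1 w / (h2 w + h3 w)] = u%:E.
Proof.
move=> g1 g2 g3 indep u01.
have [[m1 _] [m2 _] [m3 _]] := And3 g1 g2 g3.
pose H1 : {RV P >-> R} := mfun_Sub (mem_set m1).
pose H2 : {RV P >-> R} := mfun_Sub (mem_set m2).
pose H3 : {RV P >-> R} := mfun_Sub (mem_set m3).
have [a1 n1 n2 n3] := And4 (gamma_law_atomless g1) (gamma_law_le0 g1)
  (gamma_law_le0 g2) (gamma_law_le0 g3).
split; first exact: quantile_Hstar_gt0 H1 H2 H3 indep a1 n1 n2 n3 u u01.
exact: prob_gt_quantile_Hstar H1 H2 H3 indep a1 n1 n2 n3 u u01.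
Qed.

Section plane.
Context {R : realType}.
Implicit Types (a b x y z : pt R) (X : set (pt R)).

Lemma eucl_dist_ge0 a b : 0 <= eucl_dist a b.
Proof. exact: sqrtr_ge0. Qed.

Lemma eucl_dist_eq0 a b : eucl_dist a b = 0 -> a = b.
Proof.
case: a b => [a1 a2] [b1 b2] /eqP; rewrite sqrtr_eq0 /= => le0.
have /eqP : (a1 - b1) ^+ 2 + (a2 - b2) ^+ 2 = 0.
  by apply/eqP; rewrite eq_le le0 addr_ge0 ?sqr_ge0.
by rewrite paddr_eq0 ?sqr_ge0 // !sqrf_eq0 !subr_eq0 => /andP[/eqP -> /eqP ->].
Qed.

Lemma inf_min (S : set R) m : S m -> lbound S m -> inf S = m.
Proof.
move=> Sm Sge; apply/eqP; rewrite eq_le lb_le_inf //; last by exists m.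
by rewrite ge_inf //; exists m.
Qed.

Lemma min_interf_dist_le {X x z} y : (X `\ x) z -> min_interf_dist X x y <= eucl_dist z y.
Proof.
move=> Xz; apply: ge_inf; last by exists z.
by exists 0 => _ [z' _ <-]; exact: eucl_dist_ge0.
Qed.

Lemma r2dist_min {X x y z} : (X `\ x) z -> eucl_dist z y = min_interf_dist X x y ->
  r2dist X x y = min_interf_dist X x y.
Proof.
move=> Xz zy; apply: inf_min; first by exists z; rewrite zy.
by move=> t [z' [Xz' z't]]; apply: le_trans (min_interf_dist_le y Xz') z't.
Qed.

Lemma r3dist_min {X x y z z'} : (X `\ x) z -> (X `\ x) z' -> z <> z' ->
  eucl_dist z y = min_interf_dist X x y -> eucl_dist z' y = min_interf_dist X x y ->
  r3dist X x y = min_interf_dist X x y.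
Proof.
move=> Xz Xz' zz' zy z'y; apply: inf_min; first by exists z, z'; rewrite zy z'y.
by move=> t [z1 [_ [Xz1 _ _ z1t _]]]; apply: le_trans (min_interf_dist_le y Xz1) z1t.
Qed.

End plane.

Lemma sir_equidistant (R : realType) (a b c r rho alpha : R) : 0 < r -> 0 <= rho ->
  a * r `^ (- alpha) / (b * (rho * r) `^ (- alpha) + c * (rho * r) `^ (- alpha)) =
  rho `^ alpha * (a / (b + c)).
Proof.
move=> r0 rho0; rewrite powRM ?(ltW r0) // !powRN -mulrDl !invfM !invrK.
have r_neq0 : r `^ alpha != 0 by rewrite gt_eqF ?powR_gt0.
set s := r `^ alpha in r_neq0 *.
by rewrite -[RHS]mulr1 -(mulVf r_neq0); ring.
Qed.

Lemma powR_invK (R : realType) (z alpha : R) : 0 <= z -> alpha != 0 ->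
  (z `^ alpha^-1) `^ alpha = z.
Proof. by move=> z0 alpha0; rewrite -powRrM mulVf // powRr1. Qed.

Theorem lemma6 (R : realType) (d : measure_display) (T : measurableType d)
  (P : probability T R) (h1 h2 h3 : T -> R) (p q : R)
  (X : set (pt R)) (alpha theta u : R) (x x' x'' qpt : pt R) (rho : R) :
  0 < p -> 0 < q ->
  has_gamma_law P p h1 -> has_gamma_law P q h2 -> has_gamma_law P q h3 ->
  indep3 P h1 h2 h3 ->
  locally_finite X -> more_than_two X -> 0 < alpha ->
  0 < theta -> 0 < u < 1 ->
  X x ->
  rho = rho_star P h1 h2 h3 alpha theta u ->
  (* q is a corner point of Q_x(rho_star): two boundary arcs, on the ratio circles
     of the distinct interferers x' and x'', meet at q *)
  (X `\ x) x' -> (X `\ x) x'' -> x' <> x'' ->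
  tboundary (Qcell X x rho) qpt ->
  ratio_circle x x' rho qpt -> ratio_circle x x'' rho qpt ->
  closure ((tboundary (Qcell X x rho) `&` ratio_circle x x' rho) `\ qpt) qpt ->
  closure ((tboundary (Qcell X x rho) `&` ratio_circle x x'' rho) `\ qpt) qpt ->
  (* x' and x'' are the only interferers at minimal distance from q *)
  eucl_dist x' qpt = min_interf_dist X x qpt ->
  eucl_dist x'' qpt = min_interf_dist X x qpt ->
  (forall z, (X `\ x) z -> z <> x' -> z <> x'' ->
     min_interf_dist X x qpt < eucl_dist z qpt) ->
  succ_prob2 P h1 h2 h3 alpha theta X x qpt = u%:E.
Proof.
move=> _ _ g1 g2 g3 indep _ _ alpha0 theta0 u01 _ rhoE Xx' Xx'' x'x'' _ on_x' _ _ _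
  d_x' d_x'' _.
have [] := gamma_Hstar_quantile g1 g2 g3 indep u01.
set Q := quantile_Hstar P h1 h2 h3 (1 - u) => Q0 PQ.
have rho_ge0 : 0 <= rho by rewrite rhoE powR_ge0.
have rho_alpha : rho `^ alpha = theta / Q.
  by rewrite rhoE powR_invK ?gt_eqF // ltW // divr_gt0.
have r1_gt0 : 0 < eucl_dist x qpt.
  rewrite lt_neqAle eucl_dist_ge0 andbT eq_sym; apply/eqP => r1_0.
  have x'_q : x' = qpt by apply: eucl_dist_eq0; rewrite on_x' r1_0 mulr0.
  by case: Xx' => _; apply; rewrite x'_q; apply/esym/eucl_dist_eq0.
rewrite /succ_prob2 (r2dist_min Xx' d_x') (r3dist_min Xx' Xx'' x'x'' d_x' d_x'').
have sir_gt_theta t : (theta < rho `^ alpha * t) = (Q < t).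
  by rewrite rho_alpha -mulrA -[ltLHS]mulr1 ltr_pM2l // mulrC ltr_pdivlMr // mul1r.
rewrite -d_x' on_x' -PQ; congr (P _); apply/seteqP.
by split => w /=; rewrite sir_equidistant // sir_gt_theta.
Qed.
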